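(* Let $(X,\rho,\mu)$ be a $K$-doubling metric measure space, $(M,d)$ a complete metric space, $\mathcal D$ an approximate $X$-distribution for $M$, $A\subseteq X$ nonempty and $f\colon A\to M$ an arbitrary function that is approximately $\mathcal D$-differentiable at some $x\in A$. Then $x\in A_f^\mu$ and $\operatorname{Lip}^\mu f(x)\le|[F]|_{x,f(x)}$ for every approximate $\mathcal D$-differential $[F]\in\mathcal D_{x,f(x)}$ of $f$ at $x$. If in addition $A$ is a $\mu$-neighborhood of $x$, then the approximate $\mathcal D$-differential $df_x$ of $f$ at $x$ is unique and $\operatorname{Lip}^\mu f(x)=|df_x|_{x,f(x)}$.
   Context: A $K$-doubling metric measure space ($K>0$) is a triple $(X,\rho,\mu)$ where $(X,\rho)$ is a complete separable metric space and $\mu$ is a Borel-regular outer measure on $X$ with $0<\mu(B_{2r}(x))\le K\mu(B_r(x))<+\infty$ for all $x\in X$, $r>0$. A set $E\ni x$ is a $\mu$-neighborhood of $x$ if there is a Borel set $B\subseteq E$ with $\lim_{r\to0^+}\mu(B_r(x)\setminus B)/\mu(B_r(x))=0$; these sets define the $\mu$-topology on $X$. A point $x$ is a $\mu$-accumulation point of $A$ if $A\cap U\setminus\{x\}\ne\emptyset$ for every $\mu$-neighborhood $U$ of $x$; for such $x$ and $g\colon A\to\mathbb R$, $\mu\text{-}\lim_{y\in A,y\to x}g(y)=z$ means that for every $\varepsilon>0$ there is a $\mu$-neighborhood $U$ of $x$ with $|g(y)-z|<\varepsilon$ for all $y\in A\cap U\setminus\{x\}$, and $\mu\text{-}\limsup_{y\in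 A,y\to x}g(y)=\inf_U\sup_{y\in U\cap A\setminus\{x\}}g(y)$ (infimum over $\mu$-neighborhoods $U$ of $x$). For $x\in X$, $P\in M$, let $\mathcal C^\mu_{x,P}$ be the set of equivalence classes $[F]$ of Lipschitz maps $F\colon B\to M$ defined on a $\mu$-neighborhood $B$ of $x$ with $F(x)=P$, modulo $F\sim G\iff\mu\text{-}\lim_{y\to x}d(F(y),G(y))/\rho(y,x)=0$; set $|[F]|_{x,P}=\limsup_{y\to x}d(F(y),P)/\rho(y,x)$. An approximate $X$-distribution for $M$ is any subset $\mathcal D\subseteq\bigsqcup_{(x,P)}\mathcal C^\mu_{x,P}$, with $\mathcal D_{x,P}=\mathcal D\cap\mathcal C^\mu_{x,P}$. For $f\colon A\to M$ and a $\mu$-accumulation point $x\in A$ of $A$, $f$ is approximately $\mathcal D$-differentiable at $x$ if there is $[F]\in\mathcal D_{x,f(x)}$ with $\mu\text{-}\lim_{y\in A,y\to x}d(f(y),F(y))/\rho(y,x)=0$; such $[F]$ is an approximate $\mathcal D$-differential. Finally $\operatorname{Lip}^\mu f(x)=\mu\text{-}\limsup_{y\in A,y\to x}d(f(y),f(x))/\rho(y,x)$ and $A_f^\mu$ is the set of $\mu$-accumulation points $x\in A$ of $A$ with $\operatorname{Lip}^\mu f(x)<+\infty$. *)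

From HB Require Import structures.
From mathcomp Require Import all_boot all_order all_algebra.
From mathcomp Require Import all_classical all_reals all_analysis.
Set Implicit Arguments. Unset Strict Implicit. Unset Printing Implicit Defensive.
Import Order.TTheory GRing.Theory Num.Theory.
Import numFieldNormedType.Exports.
Local Open Scope classical_set_scope.
Local Open Scope ring_scope.

Section Defs.
Variable R : realType.

Definition is_metric (T : Type) (d : T -> T -> R) : Prop :=
  (forall x y, 0 <= d x y) /\ (forall x y, d x y = 0 <-> x = y) /\
  (forall x y, d x y = d y x) /\ (forall x y z, d x z <= d x y + d y z).

Definition metric_complete (T : Type) (d : T -> T -> R) : Prop :=
  forall u : nat -> T,
    (forall e, 0 < e -> exists N, forall m n, (N <= m)%N -> (N <= n)%N -> d (u m) (u n) < e) ->
    exists l, forall e, 0 < e -> exists N, forall n, (N <= n)%N -> d (u n) l < e.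

Definition metric_separable (T : Type) (d : T -> T -> R) : Prop :=
  exists D : set T, countable D /\ forall x e, 0 < e -> exists2 y, D y & d x y < e.

Definition mball (T : Type) (d : T -> T -> R) (x : T) (r : R) : set T :=
  [set y | d x y < r].

Definition metric_open (T : Type) (d : T -> T -> R) (U : set T) : Prop :=
  forall x, U x -> exists2 r, 0 < r & mball d x r `<=` U.

Definition metric_borel (T : Type) (d : T -> T -> R) : set (set T) :=
  <<s [set U | metric_open d U] >>.

Definition borel_regular (X : Type) (rho : X -> X -> R)
    (mu : {outer_measure set X -> \bar R}) : Prop :=
  (forall B, metric_borel rho B -> mu.-caratheodory B) /\
  (forall A : set X, exists B, [/\ metric_borel rho B, (A `<=` B) & mu B = mu A]).

Definition doubling_mms (K : R) (X : Type) (rho : X -> X -> R)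
    (mu : {outer_measure set X -> \bar R}) : Prop :=
  [/\ 0 < K, is_metric rho, metric_complete rho, metric_separable rho &
     borel_regular rho mu] /\
      forall x r, 0 < r ->
        (0 < mu (mball rho x (2 * r)))%E /\
        (mu (mball rho x (2 * r)) <= K%:E * mu (mball rho x r))%E /\
        (K%:E * mu (mball rho x r) < +oo)%E.

Section MuTopology.
Variables (X : Type) (rho : X -> X -> R) (mu : set X -> \bar R).

Definition mu_nbhd (x : X) (E : set X) : Prop :=
  E x /\ exists B, [/\ metric_borel rho B, (B `<=` E) &
     (fun r => fine (mu (mball rho x r `\` B)) / fine (mu (mball rho x r)))
        @ 0^'+ --> (0 : R)].

Definition mu_acc (A : set X) (x : X) : Prop :=
  forall U, mu_nbhd x U -> exists y, [/\ A y, U y & y <> x].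

Definition mu_lim (A : set X) (x : X) (g : X -> R) (z : R) : Prop :=
  forall e, 0 < e -> exists U, mu_nbhd x U /\
     forall y, A y -> U y -> y <> x -> `|g y - z| < e.

Definition mu_limsup (A : set X) (x : X) (g : X -> R) : \bar R :=
  ereal_inf [set ereal_sup [set (g y)%:E | y in U `&` A `\ x] | U in mu_nbhd x].
End MuTopology.

Section Germs.
Variables (X : Type) (rho : X -> X -> R) (mu : set X -> \bar R).
Variables (M : Type) (dM : M -> M -> R).

(* A representative (B, F) of an element of C^mu_{x,P}: F : B -> M Lipschitz
   on a mu-neighbourhood B of x with F(x) = P (values of F off B are irrelevant). *)
Definition germ (x : X) (P : M) (B : set X) (F : X -> M) : Prop :=
  [/\ mu_nbhd rho mu x B,
      exists L : R, forall y z, B y -> B z -> dM (F y) (F z) <= L * rho y z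
    & F x = P].

Definition germ_equiv (x : X) (B : set X) (F : X -> M) (B' : set X) (G : X -> M) : Prop :=
  mu_lim rho mu (B `&` B') x (fun y => dM (F y) (G y) / rho y x) 0.

Definition germ_norm (x : X) (P : M) (B : set X) (F : X -> M) : \bar R :=
  ereal_inf [set ereal_sup [set (dM (F y) P / rho y x)%:E | y in B `&` mball rho x r `\ x]
            | r in [set r : R | 0 < r]].

(* An approximate X-distribution is a set of equivalence classes; it is given
   here by a predicate [D x P B F] on representatives, and the class of (B,F)
   belongs to D_{x,P} iff it is equivalent to some representative in D. *)
Definition in_distr (D : X -> M -> set X -> (X -> M) -> Prop)
    (x : X) (P : M) (B : set X) (F : X -> M) : Prop :=
  germ x P B F /\
  exists B' G, [/\ D x P B' G, germ x P B' G & germ_equiv x B F B' G].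

Definition Lip_mu (A : set X) (f : X -> M) (x : X) : \bar R :=
  mu_limsup rho mu A x (fun y => dM (f y) (f x) / rho y x).

Definition in_A_f_mu (A : set X) (f : X -> M) (x : X) : Prop :=
  [/\ A x, mu_acc rho mu A x & (Lip_mu A f x < +oo)%E].

Definition approx_differential (D : X -> M -> set X -> (X -> M) -> Prop)
    (A : set X) (f : X -> M) (x : X) (B : set X) (F : X -> M) : Prop :=
  [/\ A x, mu_acc rho mu A x, in_distr D x (f x) B F &
      mu_lim rho mu (A `&` B) x (fun y => dM (f y) (F y) / rho y x) 0].

Definition approx_differentiable (D : X -> M -> set X -> (X -> M) -> Prop)
    (A : set X) (f : X -> M) (x : X) : Prop :=
  exists B F, approx_differential D A f x B F.
End Germs.
End Defs.

From HB Require Import structures.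
From mathcomp Require Import all_boot all_order all_algebra.
From mathcomp Require Import all_classical all_reals all_analysis.
From mathcomp Require Import ring lra.
Import Order.TTheory GRing.Theory Num.Theory.
Import numFieldNormedType.Exports.
Set Implicit Arguments. Unset Strict Implicit.
Local Open Scope classical_set_scope.
Local Open Scope ring_scope.

(** The inequality [Lip^mu f(x) <= |[F]|] only needs the triangle inequality
    [d(f y, f x) <= d(f y, F y) + d(F y, F x)] on the mu-neighbourhood where
    [d(f y, F y) / rho(y, x)] is small, and uniqueness is the same argument
    with two differentials.  The reverse inequality, when A is a
    mu-neighbourhood of x, is the substance: an estimate of
    [d(F z, f x) / rho(z, x)] by [Lip^mu f(x)] is only available on a set C
    of density one at x.  In a doubling space every point y close to x then
    has a point z of C with [rho(y, z) = o(rho(x, y))], since otherwise a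
    ball around y missing C would fill a fixed fraction of [B(x, 2 rho(x, y))];
    the Lipschitz continuity of F carries the estimate from z to y. *)

Section MetricFacts.
Variables (R : realType) (T : Type) (d : T -> T -> R).
Hypothesis hd : is_metric d.

Lemma metric_ge0 x y : 0 <= d x y.
Proof. by case: hd. Qed.

Lemma metric_xx x : d x x = 0.
Proof. by case: hd => _ [/(_ x x) [_ ->]]. Qed.

Lemma metric_gt0 x y : x <> y -> 0 < d x y.
Proof.
move=> xy; rewrite lt_neqAle metric_ge0 andbT eq_sym.
by apply/eqP => /(proj1 (hd.2.1 x y)).
Qed.

Lemma metric_sym x y : d x y = d y x.
Proof. by case: hd => _ [_ []]. Qed.

Lemma metric_triangle x y z : d x z <= d x y + d y z.
Proof. by case: hd => _ [_ [_]]. Qed.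

Lemma metric_triangle_div x y z c : 0 <= c -> d x z / c <= d x y / c + d y z / c.
Proof. by move=> c0; rewrite -mulrDl ler_wpM2r ?invr_ge0 ?metric_triangle. Qed.

Lemma mball_center x r : 0 < r -> mball d x r x.
Proof. by rewrite /mball /= metric_xx. Qed.

Lemma metric_open_mball x r : metric_open d (mball d x r).
Proof.
move=> y xy; exists (r - d x y); first by rewrite subr_gt0.
by move=> z; rewrite /mball /= => yz; have := metric_triangle x y z; lra.
Qed.

End MetricFacts.

Lemma metric_borelI (R : realType) (T : Type) (d : T -> T -> R) (B C : set T) :
  metric_borel d B -> metric_borel d C -> metric_borel d (B `&` C).
Proof.
have [_ _ _ borelI] := (sigma_algebraP (fun _ _ => subsetT _)).1
  (smallest_sigma_algebra setT [set U | metric_open d U]).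
exact: borelI.
Qed.

Lemma near_at_right0 (R : realType) (P : R -> Prop) :
  (\forall r \near 0^'+, P r) -> exists2 d, 0 < d & forall r, 0 < r < d -> P r.
Proof.
rewrite near_withinE /= => /nbhs_ballP [d d0 Pd]; exists d => // r /andP[r0 rd].
by apply: Pd (r0); rewrite /ball /= sub0r normrN gtr0_norm.
Qed.

Lemma ereal_inf_sup_le (R : realType) (I T : Type) (P : set I) (S : I -> set T)
    (g : T -> R) (c : \bar R) :
  (forall e, 0 < e -> exists2 i, P i & forall y, S i y -> ((g y)%:E <= c + e%:E)%E) ->
  (ereal_inf [set ereal_sup [set (g y)%:E | y in S i] | i in P] <= c)%E.
Proof.
move=> hc; apply/lee_addgt0Pr => e e0; have [i Pi hi] := hc e e0.
apply: le_trans (ereal_inf_lbound _) _; first by exists i.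
by apply: ge_ereal_sup => _ [y Sy <-]; exact: hi.
Qed.

Section DoublingSpace.
Variables (R : realType) (K : R) (X : Type) (rho : X -> X -> R).
Variable mu : {outer_measure set X -> \bar R}.
Hypothesis hmu : doubling_mms K rho mu.

Lemma doubling_metric : is_metric rho.
Proof. by case: hmu => -[]. Qed.

Lemma doubling_constant_gt0 : 0 < K.
Proof. by case: hmu => -[]. Qed.

Lemma mu_mball_fin_num y r : 0 < r -> mu (mball rho y r) \is a fin_num.
Proof.
move=> r0; have [_ [_ Kfin]] := hmu.2 y r r0.
rewrite ge0_fin_numE ?outer_measure_ge0 // ltey; apply: contraTneq Kfin => ->.
by rewrite mulry gtr0_sg ?doubling_constant_gt0 // mul1e ltxx.
Qed.

Lemma mu_mball_gt0 y r : 0 < r -> 0 < fine (mu (mball rho y r)).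
Proof.
move=> r0; have [mu_gt0 _] := hmu.2 y (r / 2) (divr_gt0 r0 (ltr0Sn _ 1)).
by rewrite -lte_fin fineK ?mu_mball_fin_num // -[r](@divfK _ 2) // mulrC.
Qed.

Lemma mu_sub_mball_fin_num y r (Y : set X) :
  0 < r -> Y `<=` mball rho y r -> mu Y \is a fin_num.
Proof.
move=> r0 Yy; rewrite ge0_fin_numE ?outer_measure_ge0 //.
by apply: le_lt_trans (le_outer_measure mu _ _ Yy) _; rewrite ltey_eq mu_mball_fin_num.
Qed.

Lemma mu_mball_expn2_le y t k : 0 < t ->
  (mu (mball rho y (2 ^+ k * t)) <= (K ^+ k)%:E * mu (mball rho y t))%E.
Proof.
move=> t0; elim: k => [|k IH]; first by rewrite !expr0 mul1r mul1e.
have tk : 0 < 2 ^+ k * t by rewrite mulr_gt0 // exprn_gt0.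
have [_ [Kdouble _]] := hmu.2 y _ tk.
rewrite exprS -mulrA; apply: le_trans Kdouble _.
by rewrite exprS EFinM -muleA lee_wpmul2l // lee_fin ltW // doubling_constant_gt0.
Qed.

Definition density_point (x : X) (C : set X) : Prop :=
  (fun r => fine (mu (mball rho x r `\` C)) / fine (mu (mball rho x r))) @ 0^'+ --> 0.

Lemma density_point_mball x r : 0 < r -> density_point x (mball rho x r).
Proof.
move=> r0; apply: cvg_near_cst; near=> s.
suff -> : mball rho x s `\` mball rho x r = set0 by rewrite outer_measure0 /= mul0r.
apply/seteqP; split=> // z [xz]; apply; apply: lt_trans xz _.
by near: s; exact: nbhs_right_lt.
Unshelve. all: by end_near.
Qed.

Lemma density_pointI x C1 C2 :
  density_point x C1 -> density_point x C2 -> density_point x (C1 `&` C2).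
Proof.
move=> dC1 dC2; have := cvgD dC1 dC2; rewrite addr0 /density_point => dC12.
apply: (squeeze_cvgr _ (cvg_cst 0) (dC12 _)); near=> r.
have r0 : 0 < r by near: r; exact: nbhs_right_gt.
have fin_setD C : mu (mball rho x r `\` C) \is a fin_num.
  exact: mu_sub_mball_fin_num r0 (@subDsetl _ _ C).
have mu_gt0 := mu_mball_gt0 x r0.
rewrite divr_ge0 ?fine_ge0 ?outer_measure_ge0 ?(ltW mu_gt0) //=.
rewrite -mulrDl ler_wpM2r ?invr_ge0 ?(ltW mu_gt0) //.
by rewrite -lee_fin EFinD !fineK // setDIr; exact: outer_measureU2.
Unshelve. all: by end_near.
Qed.

Lemma mu_nbhd_mball x r : 0 < r -> mu_nbhd rho mu x (mball rho x r).
Proof.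
move=> r0; split; first exact: (mball_center doubling_metric).
exists (mball rho x r); split => //; last exact: density_point_mball.
by apply: sub_sigma_algebra; exact: (metric_open_mball doubling_metric).
Qed.

Lemma mu_nbhdI x E1 E2 :
  mu_nbhd rho mu x E1 -> mu_nbhd rho mu x E2 -> mu_nbhd rho mu x (E1 `&` E2).
Proof.
move=> [E1x [C1 [bC1 sC1 dC1]]] [E2x [C2 [bC2 sC2 dC2]]]; split => //.
by exists (C1 `&` C2); split; [exact: metric_borelI | exact: setISS | exact: density_pointI].
Qed.

Lemma mu_mball_le_setD x y (C : set X) n : 0 < rho x y ->
  (forall z, C z -> rho x y / 2 ^+ n <= rho y z) ->
  (mu (mball rho x (2 * rho x y)) <=
     (K ^+ n.+2)%:E * mu (mball rho x (2 * rho x y) `\` C))%E.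
Proof.
move=> s0 farC; set s := rho x y in s0 farC *.
have hrho := doubling_metric.
have p0 : 0 < 2 ^+ n :> R by rewrite exprn_gt0.
set t := s / 2 ^+ n.
have t0 : 0 < t by rewrite divr_gt0.
have ts : t <= s by rewrite ler_pdivrMr // ler_peMr ?(ltW s0) // exprn_ege1 // ler1n.
have ball_y : mball rho x (2 * s) `<=` mball rho y (2 ^+ n.+2 * t).
  have -> : 2 ^+ n.+2 * t = 4 * s by rewrite /t !exprS; field; exact: lt0r_neq0.
  move=> z; rewrite /mball /= => xz.
  by have := metric_triangle hrho y x z; rewrite (metric_sym hrho y x) -/s; lra.
have ball_setD : mball rho y t `<=` mball rho x (2 * s) `\` C.
  move=> z; rewrite /mball /= => yz; split => [|/farC]; last by rewrite leNgt yz.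
  by have := metric_triangle hrho x y z; rewrite -/s; lra.
apply: le_trans (le_outer_measure mu _ _ ball_y) _.
apply: le_trans (mu_mball_expn2_le _ _ t0) _.
rewrite lee_wpmul2l ?lee_fin ?exprn_ge0 ?(ltW doubling_constant_gt0) //.
exact: le_outer_measure.
Qed.

(* Otherwise a ball of radius [rho x y / 2 ^+ n] around y misses C, and
   [mu_mball_le_setD] contradicts density one at the radius [2 * rho x y]. *)
Lemma density_point_approx x C e : density_point x C -> 0 < e ->
  exists2 r, 0 < r & forall y, 0 < rho x y < r -> exists2 z, C z & rho y z < e * rho x y.
Proof.
move=> dC e0; near \oo => n.
set P := K ^+ n.+2.
have P0 : 0 < P by rewrite exprn_gt0 // doubling_constant_gt0.
have Pinv0 : 0 < P^-1 by rewrite invr_gt0.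
have [d d0 small_ratio] := near_at_right0 (cvgr_lt 0 dC _ Pinv0).
exists (d / 2); first by rewrite divr_gt0.
move=> y /andP[s0 sd]; apply: contrapT => no_z.
have farC z : C z -> rho x y / 2 ^+ n <= rho y z.
  move=> Cz; rewrite leNgt; apply/negP => yz; apply: no_z; exists z => //.
  apply: lt_le_trans yz _; rewrite [e * _]mulrC ler_wpM2l ?(ltW s0) // -[_^-1]mul1r.
  by apply: ltW; near: n; exact: (near_infty_natSinv_expn_lt (PosNum e0)).
have s20 : 0 < 2 * rho x y by rewrite mulr_gt0.
have fin_setD : mu (mball rho x (2 * rho x y) `\` C) \is a fin_num.
  exact: mu_sub_mball_fin_num s20 (@subDsetl _ _ C).
have mu_gt0 := mu_mball_gt0 x s20.
have ratio_small : fine (mu (mball rho x (2 * rho x y) `\` C)) /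
    fine (mu (mball rho x (2 * rho x y))) < P^-1.
  by apply: small_ratio; rewrite s20 /=; lra.
rewrite ltr_pdivrMr // -(ltr_pM2l P0) mulrA divff ?mul1r ?gt_eqF // in ratio_small.
have := mu_mball_le_setD s0 farC.
rewrite -(fineK fin_setD) -(fineK (mu_mball_fin_num x s20)) -EFinM lee_fin.
by rewrite leNgt ratio_small.
Unshelve. all: by end_near.
Qed.

End DoublingSpace.

Section ApproxDifferential.
Variables (R : realType) (K : R) (X : Type) (rho : X -> X -> R).
Variable mu : {outer_measure set X -> \bar R}.
Variables (M : Type) (dM : M -> M -> R).
Hypotheses (hmu : doubling_mms K rho mu) (hdM : is_metric dM).

Let hrho := doubling_metric hmu.

Lemma lipschitz_density_bound x (B C : set X) (F : X -> M) (P : M) (L a : R) :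
  density_point rho mu x C -> 0 <= a ->
  (forall y z, B y -> B z -> dM (F y) (F z) <= L * rho y z) ->
  (forall z, C z -> z <> x -> B z /\ dM (F z) P <= a * rho z x) ->
  forall e, 0 < e -> exists2 r, 0 < r &
    forall y, B y -> 0 < rho x y < r -> dM (F y) P <= (a + e) * rho y x.
Proof.
move=> dC a0 FL boundC e e0.
have L0 := normr_ge0 L.
have Q0 : 0 < `|L| + a + e by lra.
set eps := e / (`|L| + a + e).
have eps0 : 0 < eps by rewrite divr_gt0.
have eps1 : eps <= 1 by rewrite ler_pdivrMr // mul1r; lra.
have eps_small : (`|L| + a) * eps <= e.
  by rewrite mulrCA ler_piMr ?(ltW e0) // ler_pdivrMr // mul1r; lra.
have [r r0 near_C] := density_point_approx hmu dC eps0.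
exists r => // y By /andP[s0 sr]; set s := rho x y in s0 sr.
have [z Cz] := near_C y (introT andP (conj s0 sr)); rewrite -/s => yz.
have zx : z <> x.
  move=> zx; move: yz; rewrite zx (metric_sym hrho y x).
  by rewrite ltNge ler_piMl ?(ltW s0).
have [Bz Fz] := boundC z Cz zx.
have Fyz : dM (F y) (F z) <= `|L| * (eps * s).
  apply: le_trans (FL y z By Bz) _.
  apply: le_trans (ler_wpM2r (metric_ge0 hrho _ _) (ler_norm L)) _.
  by rewrite ler_wpM2l // ltW.
have zx_le : rho z x <= eps * s + s.
  have := metric_triangle hrho z y x.
  by rewrite (metric_sym hrho z y) (metric_sym hrho y x) -/s; lra.
have aFz : dM (F z) P <= a * (eps * s + s) by apply: le_trans Fz (ler_wpM2l a0 zx_le).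
have := metric_triangle hdM (F y) (F z) P.
have := ler_wpM2r (ltW s0) eps_small.
rewrite (metric_sym hrho y x) -/s; lra.
Qed.

Variables (D : X -> M -> set X -> (X -> M) -> Prop) (A : set X) (f : X -> M) (x : X).

Lemma Lip_mu_le_germ_norm B F : approx_differential rho mu dM D A f x B F ->
  (Lip_mu rho mu dM A f x <= germ_norm rho dM x (f x) B F)%E.
Proof.
case=> _ _ [[Bx _ _] _] fF.
apply: le_ereal_inf_tmp => _ [r /= r0 <-]; apply: ereal_inf_sup_le => e e0.
have [V [Vx fFV]] := fF e e0.
exists (mball rho x r `&` (B `&` V)).
  exact: (mu_nbhdI hmu (mu_nbhd_mball hmu x r0) (mu_nbhdI hmu Bx Vx)).
move=> y [[[xy [By Vy]] Ay] yx].
have Fy : ((dM (F y) (f x) / rho y x)%:E <=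
    ereal_sup [set (dM (F y) (f x) / rho y x)%:E | y in B `&` mball rho x r `\ x])%E.
  by apply: ereal_sup_ubound; exists y.
apply: le_trans (leeD Fy (lexx e%:E)); rewrite -EFinD lee_fin addrC.
apply: le_trans (metric_triangle_div hdM _ (F y) _ (metric_ge0 hrho _ _)) _.
rewrite lerD2r; apply: ltW; apply: le_lt_trans (ler_norm _) _.
by rewrite -[X in `|X|]subr0; exact: fFV.
Qed.

Lemma germ_norm_le_Lip_mu B F : mu_nbhd rho mu x A ->
  approx_differential rho mu dM D A f x B F ->
  (germ_norm rho dM x (f x) B F <= Lip_mu rho mu dM A f x)%E.
Proof.
move=> A_nbhd [_ accA [[Bx [L FL] _] _] fF].
apply: le_ereal_inf_tmp => _ [U Ux <-].
set S := ereal_sup _.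
have [y0 [Ay0 Uy0 y0x]] := accA U Ux.
have S_ge : ((dM (f y0) (f x) / rho y0 x)%:E <= S)%E by apply: ereal_sup_ubound; exists y0.
have [->|SNy] := eqVneq S +oo%E; first exact: leey.
have S_fin : S \is a fin_num by rewrite fin_numE SNy andbT; apply: contraTneq S_ge => ->.
rewrite -(fineK S_fin); set s := fine S.
have s0 : 0 <= s.
  by rewrite -lee_fin fineK //; apply: le_trans S_ge; rewrite lee_fin divr_ge0 ?metric_ge0.
apply: ereal_inf_sup_le => e e0.
have e20 : 0 < e / 2 by rewrite divr_gt0.
have [V [Vx fFV]] := fF _ e20.
have [_ [C [_ CW dC]]] := mu_nbhdI hmu Ux (mu_nbhdI hmu A_nbhd (mu_nbhdI hmu Bx Vx)).
have boundC z : C z -> z <> x -> B z /\ dM (F z) (f x) <= (s + e / 2) * rho z x.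
  move=> Cz zx; have [Uz [Az [Bz Vz]]] := CW z Cz; split => //.
  have zx0 := metric_gt0 hrho zx.
  have f_le : dM (f z) (f x) / rho z x <= s.
    by rewrite -lee_fin fineK //; apply: ereal_sup_ubound; exists z.
  have := fFV z (conj Az Bz) Vz zx; rewrite subr0 => /(le_lt_trans (ler_norm _)) fF_lt.
  rewrite -ler_pdivrMr // addrC.
  apply: le_trans (metric_triangle_div hdM _ (f z) _ (ltW zx0)) _.
  by rewrite (metric_sym hdM (F z)); apply: lerD => //; exact: ltW.
have [r r0 near_x] :=
  lipschitz_density_bound dC (addr_ge0 s0 (ltW e20)) FL boundC e20.
exists r => // y [[By xy] yx].
have yx0 := metric_gt0 hrho yx.
rewrite -EFinD lee_fin ler_pdivrMr // [e]splitr addrA.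
by apply: near_x => //; rewrite {1}(metric_sym hrho) yx0.
Qed.

Lemma approx_differential_unique B F B' F' : mu_nbhd rho mu x A ->
  approx_differential rho mu dM D A f x B F ->
  approx_differential rho mu dM D A f x B' F' ->
  germ_equiv rho mu dM x B F B' F'.
Proof.
move=> A_nbhd [_ _ _ fF] [_ _ _ fF'] e e0.
have e20 : 0 < e / 2 by rewrite divr_gt0.
have [V [Vx fFV]] := fF _ e20; have [V' [V'x fFV']] := fF' _ e20.
exists (A `&` (V `&` V')); split.
  exact: (mu_nbhdI hmu A_nbhd (mu_nbhdI hmu Vx V'x)).
move=> y [By B'y] [Ay [Vy V'y]] yx.
have := fFV y (conj Ay By) Vy yx; have := fFV' y (conj Ay B'y) V'y yx.
rewrite !subr0 !ger0_norm ?divr_ge0 ?metric_ge0 // => fF'_lt fF_lt.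
apply: le_lt_trans (metric_triangle_div hdM _ (f y) _ (metric_ge0 hrho _ _)) _.
by rewrite (metric_sym hdM (F y)) [e]splitr ltrD.
Qed.

Lemma germ_norm_lt_pinfty P B F :
  germ rho mu dM x P B F -> (germ_norm rho dM x P B F < +oo)%E.
Proof.
move=> [[Bx _] [L FL] <-]; apply: (@le_lt_trans _ _ `|L|%:E); last exact: ltry.
apply: le_trans (ereal_inf_lbound _) _; first by exists 1 => /=.
apply: ge_ereal_sup => _ [y [[By _] yx] <-].
have yx0 := metric_gt0 hrho yx.
rewrite lee_fin ler_pdivrMr //; apply: le_trans (FL y x By Bx) _.
by rewrite ler_wpM2r ?(ltW yx0) ?ler_norm.
Qed.

End ApproxDifferential.

Unset Implicit Arguments.
Set Strict Implicit.

Theorem proposition2p6 (R : realType) (K : R) (X : Type) (rho : X -> X -> R)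
    (mu : {outer_measure set X -> \bar R}) (M : Type) (dM : M -> M -> R)
    (D : X -> M -> set X -> (X -> M) -> Prop) (A : set X) (f : X -> M) (x : X) :
  doubling_mms K rho mu ->
  is_metric dM -> metric_complete dM ->
  A !=set0 -> A x ->
  approx_differentiable rho mu dM D A f x ->
  (in_A_f_mu rho mu dM A f x /\
   forall B F, approx_differential rho mu dM D A f x B F ->
     (Lip_mu rho mu dM A f x <= germ_norm rho dM x (f x) B F)%E) /\
  (mu_nbhd rho mu x A ->
     (forall B F B' F', approx_differential rho mu dM D A f x B F ->
        approx_differential rho mu dM D A f x B' F' ->
        germ_equiv rho mu dM x B F B' F') /\
     (forall B F, approx_differential rho mu dM D A f x B F ->
        Lip_mu rho mu dM A f x = germ_norm rho dM x (f x) B F)).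
Proof.
move=> hmu hdM _ _ Ax [B0 [F0 dF0]]; split.
- split=> [|B F dF]; last exact: (Lip_mu_le_germ_norm hmu hdM dF).
  have [_ accA [germ0 _] _] := dF0; split=> //.
  exact: (le_lt_trans (Lip_mu_le_germ_norm hmu hdM dF0) (germ_norm_lt_pinfty hmu germ0)).
- move=> A_nbhd; split=> [B F B' F'|B F dF].
    exact: (approx_differential_unique hmu hdM).
  apply: le_anti; rewrite (Lip_mu_le_germ_norm hmu hdM dF).
  exact: (germ_norm_le_Lip_mu hmu hdM A_nbhd dF).
Qed.
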